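(* Consider the networked closed-loop system described in the context (plant with bounded additive disturbance, local nominal model with consistent actuator and ancillary controller, remote estimator and tube-based tracking MPC), and suppose the initial plant and nominal states satisfy $x(0)-x_{n}(0)\in\mathbb{Z}_K$. If at time step $k$ the consistency indicator satisfies $\Theta_k=1$, then $x(k)\in\{\hat{x}(k|k-1)\}\oplus\mathbb{Z}_K$.
   Context: Plant: $x(k+1)=Ax(k)+Bu(k)+w(k)$ with $x(k)\in\mathbb{R}^{n_x}$, $u(k)\in\mathbb{R}^{n_u}$, $(A,B)$ stabilizable, and $w(k)\in\mathbb{W}=\{w: H_w w\le h_w\}$ for all $k$, where $\mathbb{W}$ is compact and contains the origin in its interior. State and input constraint sets $\mathbb{X}=\{x:H_x x\le h_x\}$, $\mathbb{U}=\{u:H_u u\le h_u\}$ are bounded and contain the origin in their interior. The Minkowski sum is $\oplus$, the Pontryagin difference is $\ominus$, and $M\mathbb{P}=\{Mp:p\in\mathbb{P}\}$. Network: binary variables $\theta_k$ ($=1$ iff the packet $U_k$ sent by the remote controller at time $k$ is received by the plant) and $\gamma_k$ ($=1$ iff the packet $X_k$ sent by the plant at time $k$ is received by the controller). Sets: $K$ is a gain with spectral radius $\rho(A-BK)<1$, and $\mathbb{Z}_K=\bigoplus_{i=0}^\infty (A-BK)^i\mathbb{W}$. Tightened sets: $\mathbb{X}_c=\mathbb{X}\ominus\mathbb{Z}_K$, $\mathbb{U}_c=\mathbb{U}\ominus(-K)\mathbb{Z}_K$. $\bar K$ is a gain with $\rho(A-B\bar K)<1$. With $x_a=(x_n,\bar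 x,\bar u)$ and $A_a=\begin{bmatrix}A-B\bar K & B\bar K & B\\ 0& I&0\\0&0&I\end{bmatrix}$, let $X_{f,\bar K}=\{x_a: A_a^k x_a\in\mathbb{X}_{a,\bar K}\ \forall k\ge0\}$, where $\mathbb{X}_{a,\bar K}=\{x_a: x_n\in\mathbb{X}_c,\ \bar u-\bar K(x_n-\bar x)\in\mathbb{U}_c\}$, and for fixed $\lambda\in(0,1)$, $X^\lambda_{f,\bar K}=X_{f,\bar K}\cap\{(x_n,\bar x,\bar u):\bar x\in\lambda\mathbb{X}_c,\ \bar u\in\lambda\mathbb{U}_c\}$. Remote MPC at time $k$ (horizon $N$, symmetric $Q\ge0$, $R>0$, $T>0$, $P$ solving $P=(A-B\bar K)^\top P(A-B\bar K)+Q+\bar K^\top R\bar K$, reference $x_r$): minimize over $\mathbf{u}(0),\dots,\mathbf{u}(N-1),\bar x,\bar u$ the cost $\sum_{i=0}^{N-1}(\|\mathbf{x}(i)-\bar x\|_Q^2+\|\mathbf{u}(i)-\bar u\|_R^2)+\|\mathbf{x}(N)-\bar x\|_P^2+\|\bar x-x_r\|_T^2$ subject to $\mathbf{x}(i+1)=A\mathbf{x}(i)+B\mathbf{u}(i)$, $\mathbf{x}(i)\in\mathbb{X}_c$, $\mathbf{u}(i)\in\mathbb{U}_c$ for $i=0,\dots,N-1$, $\mathbf{x}(0)=\hat x(k|k-1)$, $(\mathbf{x}(N),\bar x,\bar u)\in X^\lambda_{f,\bar K}$, and $(A-I)\bar x+B\bar u=0$. With optimal solution $\mathbf{u}^*_k,\bar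 x^*_k,\bar u^*_k$, the controller sends $U_k=\{\mathbf{u}^*_k,\ \bar u^*_k+\bar K\bar x^*_k,\ q_k\}$. Local side: $\Theta_k=\prod_{i=q_k+1}^k\theta_i$ if $\theta_k=1$ and $\Theta_k=0$ otherwise (with $q_k$ taken from the packet $U_k$); $s_k=\Theta_k k+(1-\Theta_k)s_{k-1}$. Nominal input (consistent actuator): $u_n(k)=\mathbf{u}^*_{s_k}(k-s_k)$ if $k-s_k<N$, else $u_n(k)=\bar u^*_{s_k}+\bar K\bar x^*_{s_k}-\bar K x_n(k)$. Nominal model $x_n(k+1)=Ax_n(k)+Bu_n(k)$. Applied input (ancillary controller) $u(k)=u_n(k)-K(x(k)-x_n(k))$. The plant sends $X_k=\{x_n(k),s_k\}$. Remote estimator: $\hat x(k+1|k)=A\hat x(k|k)+B\hat u(k|k)$ with $\hat x(k|k)=\gamma_k x_n(k)+(1-\gamma_k)\hat x(k|k-1)$, $\hat u(k|k)=\gamma_k u_n(k)+(1-\gamma_k)\mathbf{u}^*_k(0)$ (where $u_n(k)$ is recomputed remotely by the consistent actuator rule from the received $s_k$), and $q_{k+1}=\gamma_k k+(1-\gamma_k)q_k$. *)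

From mathcomp Require Import all_boot all_order all_algebra.
From mathcomp Require Import all_classical all_reals all_analysis.
From mathcomp Require Import complex.
Set Implicit Arguments. Unset Strict Implicit. Unset Printing Implicit Defensive.
Import Order.TTheory GRing.Theory Num.Theory.
Import numFieldNormedType.Exports.
Local Open Scope ring_scope.
Local Open Scope classical_set_scope.

Section Sets.
Variable R : realType.

Definition polyset (n p : nat) (H : 'M[R]_(p, n)) (h : 'cV[R]_p) : 'cV[R]_n -> Prop :=
  fun x => forall i : 'I_p, (H *m x) i ord0 <= h i ord0.

Definition sing (n : nat) (x : 'cV[R]_n) : 'cV[R]_n -> Prop := fun z => z = x.

Definition minkowski_sum (n : nat) (S T : 'cV[R]_n -> Prop) : 'cV[R]_n -> Prop :=
  fun z => exists x y, S x /\ T y /\ z = x + y.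

Definition pdiff (n : nat) (S T : 'cV[R]_n -> Prop) : 'cV[R]_n -> Prop :=
  fun z => forall y, T y -> S (z + y).

Definition limage (m n : nat) (M : 'M[R]_(m, n)) (P : 'cV[R]_n -> Prop) : 'cV[R]_m -> Prop :=
  fun z => exists p, P p /\ z = M *m p.

Definition sscale (n : nat) (l : R) (P : 'cV[R]_n -> Prop) : 'cV[R]_n -> Prop :=
  fun z => exists p, P p /\ z = l *: p.

Definition bounded_vset (n : nat) (S : 'cV[R]_n -> Prop) : Prop :=
  exists M : R, forall x, S x -> forall i, `|x i ord0| <= M.

Definition closed_vset (n : nat) (S : 'cV[R]_n -> Prop) : Prop :=
  forall (xs : nat -> 'cV[R]_n) (x : 'cV[R]_n),
    (forall k, S (xs k)) ->
    (forall i, (fun k => xs k i ord0) @ \oo --> x i ord0) -> S x.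

Definition compact_vset (n : nat) (S : 'cV[R]_n -> Prop) : Prop :=
  bounded_vset S /\ closed_vset S.

Definition origin_in_interior (n : nat) (S : 'cV[R]_n -> Prop) : Prop :=
  exists e : R, 0 < e /\ forall x : 'cV[R]_n, (forall i, `|x i ord0| < e) -> S x.

(* infinite Minkowski sum  \bigoplus_{i>=0} M^i W : the set of all sums of
   convergent series  sum_i M^i w_i  with every w_i in W *)
Definition inf_msum (n : nat) (M : 'M[R]_n) (W : 'cV[R]_n -> Prop) : 'cV[R]_n -> Prop :=
  fun z => exists w : nat -> 'cV[R]_n, (forall i, W (w i)) /\
    forall r : 'I_n, (fun N => (\sum_(i < N) (M ^+ i *m w i)) r ord0) @ \oo --> z r ord0.

Definition spectral_radius_lt1 (n : nat) (M : 'M[R]_n) : Prop :=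
  forall l : R[i], root (char_poly (map_mx (fun r : R => (r%:C)%C) M)) l -> `|l| < 1.

Definition stabilizable (nx nu : nat) (A : 'M[R]_nx) (B : 'M[R]_(nx, nu)) : Prop :=
  exists K : 'M[R]_(nu, nx), spectral_radius_lt1 (A - B *m K).

Definition qnorm (n : nat) (Q : 'M[R]_n) (v : 'cV[R]_n) : R := (v^T *m Q *m v) ord0 ord0.

Definition psd (n : nat) (Q : 'M[R]_n) : Prop := Q^T = Q /\ forall v, 0 <= qnorm Q v.
Definition pd (n : nat) (Q : 'M[R]_n) : Prop := Q^T = Q /\ forall v, v != 0 -> 0 < qnorm Q v.

End Sets.

Section MPC.
Variables (R : realType) (nx nu : nat).
Variables (A : 'M[R]_nx) (B : 'M[R]_(nx, nu)).

Definition ZK (K : 'M[R]_(nu, nx)) (W : 'cV[R]_nx -> Prop) : 'cV[R]_nx -> Prop :=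
  inf_msum (A - B *m K) W.

Definition Xc K W (X : 'cV[R]_nx -> Prop) : 'cV[R]_nx -> Prop := pdiff X (ZK K W).
Definition Uc K W (U : 'cV[R]_nu -> Prop) : 'cV[R]_nu -> Prop :=
  pdiff U (limage (- K) (ZK K W)).

Definition aug (xn xb : 'cV[R]_nx) (ub : 'cV[R]_nu) : 'cV[R]_(nx + nx + nu) :=
  col_mx (col_mx xn xb) ub.
Definition aug_xn (xa : 'cV[R]_(nx + nx + nu)) : 'cV[R]_nx := usubmx (usubmx xa).
Definition aug_xb (xa : 'cV[R]_(nx + nx + nu)) : 'cV[R]_nx := dsubmx (usubmx xa).
Definition aug_ub (xa : 'cV[R]_(nx + nx + nu)) : 'cV[R]_nu := dsubmx xa.

Definition Aa (Kb : 'M[R]_(nu, nx)) : 'M[R]_(nx + nx + nu) :=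
  block_mx (block_mx (A - B *m Kb) (B *m Kb) 0 1%:M) (col_mx B 0) 0 1%:M.

Definition Xa Kb (Xc' : 'cV[R]_nx -> Prop) (Uc' : 'cV[R]_nu -> Prop)
  (xa : 'cV[R]_(nx + nx + nu)) : Prop :=
  Xc' (aug_xn xa) /\ Uc' (aug_ub xa - Kb *m (aug_xn xa - aug_xb xa)).

Definition Xf Kb Xc' Uc' (xa : 'cV[R]_(nx + nx + nu)) : Prop :=
  forall k : nat, Xa Kb Xc' Uc' (Aa Kb ^+ k *m xa).

Definition Xf_lambda Kb Xc' Uc' (lam : R) (xa : 'cV[R]_(nx + nx + nu)) : Prop :=
  Xf Kb Xc' Uc' xa /\ sscale lam Xc' (aug_xb xa) /\ sscale lam Uc' (aug_ub xa).

Fixpoint pred_state (x0 : 'cV[R]_nx) (u : nat -> 'cV[R]_nu) (i : nat) : 'cV[R]_nx :=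
  match i with
  | 0 => x0
  | i'.+1 => A *m pred_state x0 u i' + B *m u i'
  end.

Definition mpc_feasible Kb Xc' Uc' (lam : R) (N : nat) (x0 : 'cV[R]_nx)
  (u : nat -> 'cV[R]_nu) (xb : 'cV[R]_nx) (ub : 'cV[R]_nu) : Prop :=
  (forall i, (i < N)%N -> Xc' (pred_state x0 u i) /\ Uc' (u i)) /\
  Xf_lambda Kb Xc' Uc' lam (aug (pred_state x0 u N) xb ub) /\
  (A - 1%:M) *m xb + B *m ub = 0.

Definition mpc_cost (Q : 'M[R]_nx) (Rw : 'M[R]_nu) (P T : 'M[R]_nx) (xr : 'cV[R]_nx)
  (N : nat) (x0 : 'cV[R]_nx) (u : nat -> 'cV[R]_nu) (xb : 'cV[R]_nx) (ub : 'cV[R]_nu) : R :=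
  \sum_(i < N) (qnorm Q (pred_state x0 u i - xb) + qnorm Rw (u i - ub))
  + qnorm P (pred_state x0 u N - xb) + qnorm T (xb - xr).

Definition mpc_optimal Kb Xc' Uc' lam Q Rw P T xr N x0 u xb ub : Prop :=
  mpc_feasible Kb Xc' Uc' lam N x0 u xb ub /\
  forall u' xb' ub', mpc_feasible Kb Xc' Uc' lam N x0 u' xb' ub' ->
    mpc_cost Q Rw P T xr N x0 u xb ub <= mpc_cost Q Rw P T xr N x0 u' xb' ub'.

End MPC.

(* q_k : q_0 = -1 (no measurement received yet), q_{k+1} = gamma_k k + (1-gamma_k) q_k *)
Fixpoint qseq (gamma : nat -> bool) (k : nat) : int :=
  match k with
  | 0 => (-1)%R
  | k'.+1 => if gamma k' then (k' : int) else qseq gamma k'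
  end.

(* Theta_k = prod_{i = q_k+1}^{k} theta_i  if theta_k = 1, and 0 otherwise *)
Definition Theta (theta gamma : nat -> bool) (k : nat) : bool :=
  theta k && [forall i : 'I_k.+1, ((qseq gamma k < (i : nat)%:Z)%R) ==> theta i].

(* s_k = Theta_k k + (1 - Theta_k) s_{k-1}, with initial value s_{-1} = s_init *)
Fixpoint sseq (theta gamma : nat -> bool) (s_init : nat) (k : nat) : nat :=
  match k with
  | 0 => if Theta theta gamma 0 then 0%N else s_init
  | k'.+1 => if Theta theta gamma k then k else sseq theta gamma s_init k'
  end.

Definition un_rule (R : realType) (nx nu : nat) (N : nat) (Kb : 'M[R]_(nu, nx))
  (uplan : nat -> nat -> 'cV[R]_nu) (xbopt : nat -> 'cV[R]_nx) (ubopt : nat -> 'cV[R]_nu)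
  (k sk : nat) (xnk : 'cV[R]_nx) : 'cV[R]_nu :=
  if (k - sk < N)%N then uplan sk (k - sk)%N
  else ubopt sk + Kb *m xbopt sk - Kb *m xnk.

(* Under the ancillary controller the error e = x - x_n obeys
   e(j+1) = (A - B K) e(j) + w(j), and Z_K = (A - B K) Z_K (+) W is invariant
   under this affine map, so e(j) stays in Z_K for every j.  If Theta_k = 1,
   every loss of a measurement at a time j < k happens while Theta_j = 1
   (q_j is then unchanged and q_j < j), so the plant applies u*_j(0), which is
   precisely the input the remote estimator propagates in that case.  Hence
   xhat(k|k-1) = x_n(k) and x(k) = xhat(k|k-1) + e(k). *)

From mathcomp Require Import all_boot all_order all_algebra.
From mathcomp Require Import all_classical all_reals all_analysis.
Import Order.TTheory GRing.Theory Num.Theory.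
Import numFieldNormedType.Exports.
Local Open Scope ring_scope.
Local Open Scope classical_set_scope.

Lemma cvg_mulmx_col (R : realType) (m n : nat) (M : 'M[R]_(m, n))
    (v : nat -> 'cV[R]_n) (l : 'cV[R]_n) :
  (forall j, (fun N => v N j ord0) @ \oo --> l j ord0) ->
  forall i, (fun N => (M *m v N) i ord0) @ \oo --> (M *m l) i ord0.
Proof.
move=> v_cvg i; rewrite mxE; under eq_fun do rewrite mxE.
apply: cvg_big => [|j _]; first exact: add_continuous.
exact: cvgMl_tmp.
Qed.

Lemma sum_pow_mulmx_recl (R : pzRingType) (n : nat) (M : 'M[R]_n)
    (v : nat -> 'cV[R]_n) (N : nat) :
  \sum_(i < N.+1) M ^+ i *m v i = v 0%N + M *m \sum_(i < N) M ^+ i *m v i.+1.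
Proof.
rewrite big_ord_recl expr0 mul1mx mulmx_sumr; congr (_ + _).
by apply: eq_bigr => i _; rewrite exprS mulmxA mulmxE.
Qed.

Lemma inf_msum_affine (R : realType) (n : nat) (M : 'M[R]_n) (W : 'cV[R]_n -> Prop)
    (z w0 : 'cV[R]_n) :
  inf_msum M W z -> W w0 -> inf_msum M W (M *m z + w0).
Proof.
move=> [w [Ww w_cvg]] Ww0.
pose v i := if i is i'.+1 then w i' else w0.
exists v; split=> [[|i] //=|r].
rewrite -cvg_shiftS; under eq_fun do rewrite /= sum_pow_mulmx_recl addrC mxE.
rewrite mxE; apply: cvgD; [exact: cvg_mulmx_col | exact: cvg_cst].
Qed.

Lemma ancillary_error_step (R : pzRingType) (nx nu : nat) (A : 'M[R]_nx)
    (B : 'M[R]_(nx, nu)) (K : 'M[R]_(nu, nx)) (x xn w : 'cV[R]_nx) (un : 'cV[R]_nu) :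
  (A *m x + B *m (un - K *m (x - xn)) + w) - (A *m xn + B *m un)
  = (A - B *m K) *m (x - xn) + w.
Proof.
rewrite mulmxBr mulmxBl mulmxA [in RHS]mulmxBr addrAC opprD addrACA -addrA.
by rewrite (addrAC (B *m un)) subrr add0r addrA.
Qed.

Lemma ZK_error_invariant {R : realType} {nx nu : nat} {A : 'M[R]_nx}
    {B : 'M[R]_(nx, nu)} {K : 'M[R]_(nu, nx)} {W : 'cV[R]_nx -> Prop}
    {x xn w : nat -> 'cV[R]_nx} {u un : nat -> 'cV[R]_nu} :
  (forall j, W (w j)) ->
  (forall j, x j.+1 = A *m x j + B *m u j + w j) ->
  (forall j, xn j.+1 = A *m xn j + B *m un j) ->
  (forall j, u j = un j - K *m (x j - xn j)) ->
  ZK A B K W (x 0%N - xn 0%N) -> forall j, ZK A B K W (x j - xn j).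
Proof.
move=> Ww x_step xn_step u_def e0; elim=> [//|j IH].
rewrite x_step xn_step u_def ancillary_error_step.
exact: inf_msum_affine.
Qed.

Lemma qseq_lt (gamma : nat -> bool) (j : nat) : qseq gamma j < j%:Z.
Proof.
elim: j => [//|j IH] /=; case: (gamma j); first by rewrite ltz_nat.
by rewrite (lt_trans IH) ?ltz_nat.
Qed.

Lemma Theta_lost_meas {theta gamma : nat -> bool} {j : nat} :
  ~~ gamma j -> Theta theta gamma j.+1 -> Theta theta gamma j.
Proof.
move=> gj /andP[_ /forallP recv]; have qS : qseq gamma j.+1 = qseq gamma j.
  by rewrite /= (negbTE gj).
apply/andP; split.
  by apply: (implyP (recv (Ordinal (ltnW (ltnSn j.+1))))); rewrite qS qseq_lt.
apply/forallP=> i; apply/implyP=> qi.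
by apply: (implyP (recv (widen_ord (leqnSn _) i))); rewrite qS.
Qed.

Lemma sseq_Theta (theta gamma : nat -> bool) (s_init j : nat) :
  Theta theta gamma j -> sseq theta gamma s_init j = j.
Proof. by case: j => [|j] /= ->. Qed.

Section RemoteEstimator.
Context {R : realType} {nx nu N : nat} {A : 'M[R]_nx} {B : 'M[R]_(nx, nu)}
  {Kb : 'M[R]_(nu, nx)} {uplan : nat -> nat -> 'cV[R]_nu}
  {xbopt : nat -> 'cV[R]_nx} {ubopt : nat -> 'cV[R]_nu}
  {theta gamma : nat -> bool} {s_init : nat}
  {xn xhat : nat -> 'cV[R]_nx} {un : nat -> 'cV[R]_nu}.

Hypothesis N_gt0 : (0 < N)%N.
Hypothesis un_def : forall j,
  un j = un_rule N Kb uplan xbopt ubopt j (sseq theta gamma s_init j) (xn j).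
Hypothesis xn_step : forall j, xn j.+1 = A *m xn j + B *m un j.
Hypothesis xhat0 : xhat 0%N = xn 0%N.
Hypothesis xhat_step : forall j, xhat j.+1 =
  A *m (if gamma j then xn j else xhat j)
  + B *m (if gamma j then un_rule N Kb uplan xbopt ubopt j (sseq theta gamma s_init j) (xn j)
          else uplan j 0%N).

Lemma xhat_Theta (j : nat) : Theta theta gamma j -> xhat j = xn j.
Proof.
elim: j => [//|j IH] Tj; rewrite xhat_step xn_step un_def.
case gj: (gamma j) => //; have Tj' := Theta_lost_meas (negbT gj) Tj.
by rewrite IH // /un_rule sseq_Theta // subnn N_gt0.
Qed.

End RemoteEstimator.

Theorem proposition1 (R : realType) (nx nu pw px pu : nat)
  (A : 'M[R]_nx) (B : 'M[R]_(nx, nu))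
  (Hw : 'M[R]_(pw, nx)) (hw : 'cV[R]_pw)
  (Hx : 'M[R]_(px, nx)) (hx : 'cV[R]_px)
  (Hu : 'M[R]_(pu, nu)) (hu : 'cV[R]_pu)
  (K Kb : 'M[R]_(nu, nx))
  (N : nat) (Q : 'M[R]_nx) (Rw : 'M[R]_nu) (T P : 'M[R]_nx) (lam : R)
  (xr : 'cV[R]_nx)
  (theta gamma : nat -> bool) (s_init : nat)
  (x xn : nat -> 'cV[R]_nx) (u un : nat -> 'cV[R]_nu) (w : nat -> 'cV[R]_nx)
  (xhat : nat -> 'cV[R]_nx)
  (uplan : nat -> nat -> 'cV[R]_nu) (xbopt : nat -> 'cV[R]_nx) (ubopt : nat -> 'cV[R]_nu)
  (k : nat) :
  (* standing assumptions *)
  stabilizable A B ->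
  compact_vset (polyset Hw hw) -> origin_in_interior (polyset Hw hw) ->
  bounded_vset (polyset Hx hx) -> origin_in_interior (polyset Hx hx) ->
  bounded_vset (polyset Hu hu) -> origin_in_interior (polyset Hu hu) ->
  spectral_radius_lt1 (A - B *m K) ->
  spectral_radius_lt1 (A - B *m Kb) ->
  (0 < lam < 1) ->
  (0 < N)%N ->
  psd Q -> pd Rw -> pd T ->
  P = (A - B *m Kb)^T *m P *m (A - B *m Kb) + Q + Kb^T *m Rw *m Kb ->
  (* plant with bounded disturbance *)
  (forall j, polyset Hw hw (w j)) ->
  (forall j, x j.+1 = A *m x j + B *m u j + w j) ->
  (* remote MPC: at each time j the controller solves the MPC problem
     from xhat(j|j-1) and sends (uplan j, ubopt j + Kb xbopt j, q_j) *)
  (forall j, mpc_optimal A B Kb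
               (Xc A B K (polyset Hw hw) (polyset Hx hx))
               (Uc A B K (polyset Hw hw) (polyset Hu hu))
               lam Q Rw P T xr N (xhat j) (uplan j) (xbopt j) (ubopt j)) ->
  (* local side: consistent actuator, nominal model, ancillary controller *)
  (forall j, un j = un_rule N Kb uplan xbopt ubopt j (sseq theta gamma s_init j) (xn j)) ->
  (forall j, xn j.+1 = A *m xn j + B *m un j) ->
  (forall j, u j = un j - K *m (x j - xn j)) ->
  (* remote estimator: xhat j = xhat(j|j-1), initialised with xhat(0|-1) = x_n(0) *)
  xhat 0%N = xn 0%N ->
  (forall j, xhat j.+1 =
     A *m (if gamma j then xn j else xhat j)
     + B *m (if gamma j then un_rule N Kb uplan xbopt ubopt j (sseq theta gamma s_init j) (xn j)
             else uplan j 0%N)) ->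
  (* initial condition *)
  ZK A B K (polyset Hw hw) (x 0%N - xn 0%N) ->
  (* claim *)
  Theta theta gamma k ->
  minkowski_sum (sing (xhat k)) (ZK A B K (polyset Hw hw)) (x k).
Proof.
move=> _ _ _ _ _ _ _ _ _ _ N_gt0 _ _ _ _ Ww x_step _ un_def xn_step u_def xhat0 xhat_step e0 Tk.
exists (xhat k), (x k - xhat k); split=> //; split; last by rewrite addrC subrK.
rewrite (xhat_Theta N_gt0 un_def xn_step xhat0 xhat_step _ Tk).
exact: ZK_error_invariant Ww x_step xn_step u_def e0 k.
Qed.
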